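(* Fix $\epsilon\in(0,1)$. For a permutation of $[n]$ ($n$ even) chosen uniformly among those with all cycle lengths even, and even $k$, the expected number $\mathbb{E}_e^{(n)}Y_k$ of elements in $k$-cycles satisfies, uniformly, \[ \mathbb{E}_e^{(n)}Y_k\to\left(1-\frac kn\right)^{-1/2} \] as $k,n\to\infty$ with $0<k/n<1-\epsilon$; that is, $\mathbb{E}_e^{(n)}Y_k=\left(1-\frac kn\right)^{-1/2}(1+O(n^{-1}))$ with the implied constant uniform over such $k,n$.
   Context: $\mathbb{E}_e^{(n)}$ denotes expectation under the uniform measure on permutations of $[n]$ with all cycle lengths even. $Y_k=kX_k$, where $X_k$ is the number of $k$-cycles. *)

From HB Require Import structures.
From mathcomp Require Import all_boot all_order all_algebra all_fingroup.
From mathcomp Require Import reals.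
Set Implicit Arguments. Unset Strict Implicit. Unset Printing Implicit Defensive.
Import Order.TTheory GRing.Theory Num.Theory.
Local Open Scope ring_scope.

Definition even_cycle_perms (n : nat) : {set {perm 'I_n}} :=
  [set s : {perm 'I_n} | [forall C in porbits s, ~~ odd #|C|]].

Definition Xk (n k : nat) (s : {perm 'I_n}) : nat :=
  #|[set C in porbits s | #|C| == k]|.

Definition Yk (n k : nat) (s : {perm 'I_n}) : nat := (k * Xk k s)%N.

Definition EeYk (R : realType) (n k : nat) : R :=
  (\sum_(s in even_cycle_perms n) (Yk k s)%:R) / (#|even_cycle_perms n|)%:R.

From HB Require Import structures.
From mathcomp Require Import all_boot all_order all_algebra all_fingroup.
From mathcomp Require Import reals.
From mathcomp Require Import ring lra.
Set Implicit Arguments. Unset Strict Implicit. Unset Printing Implicit Defensive.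
Import Order.TTheory GRing.Theory Num.Theory.

(* Splitting off a cycle C is a bijection between the permutations with even
   cycles having C as a cycle and the pairs (cyclic permutation of C, permutation
   of the complement with even cycles).  Counting the pairs (point, permutation)
   by the cycle through the point turns this into recursions giving (a-1)! cyclic
   permutations of an a-set and ((2m-1)!!)^2 permutations of [2m] with even
   cycles; summing over the k-cycles then gives
   E Y_k = n^(k) ((n-k-1)!!)^2 / ((n-1)!!)^2 = prod_(p <= i < m) (2i+2)/(2i+1)
   for n = 2m, n - k = 2p.  An induction on m squeezes the square of this product
   between (4p-1)m^2/(p^2(4m-1)) and m/p, which puts it within a factor
   1 - 1/(4p) of sqrt(m/p) = (1 - k/n)^(-1/2); finally 4p = 2(n-k) > eps n. *)

Section CycleDecomposition.
Local Open Scope group_scope.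
Variable T : finType.
Implicit Types (P : pred nat) (A B C D : {set T}) (s t c r : {perm T}).

Lemma expg_stable B s y i : {in B, forall z, s z \in B} -> y \in B -> (s ^+ i) y \in B.
Proof.
move=> sB yB; elim: i => [|i IH]; first by rewrite expg0 perm1.
by rewrite expgSr permM sB.
Qed.

Lemma porbit_subset B s y : {in B, forall z, s z \in B} -> y \in B -> porbit s y \subset B.
Proof. by move=> sB yB; apply/subsetP=> z /porbitP[i ->]; apply: expg_stable. Qed.

Lemma eq_porbit_in B s t y : {in B, forall z, s z \in B} -> {in B, s =1 t} -> y \in B ->
  porbit s y = porbit t y.
Proof.
move=> sB est yB.
have E i : (s ^+ i) y = (t ^+ i) y.
  elim: i => [|i IH]; first by rewrite !expg0.
  by rewrite !expgSr !permM -IH est // expg_stable.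
by apply/setP=> z; apply/porbitP/porbitP => -[i ->]; exists i; rewrite E.
Qed.

Lemma mem_porbit_perm s x z : (s z \in porbit s x) = (z \in porbit s x).
Proof. by rewrite -!eq_porbit_mem -[s z]/((s ^+ 1) z) porbit_perm. Qed.

Lemma porbitsP s C : reflect (exists x, C = porbit s x) (C \in porbits s).
Proof. by apply: (iffP imsetP) => [[x _ ->]|[x ->]]; exists x. Qed.

Lemma perm_onS A B s : A \subset B -> perm_on A s -> perm_on B s.
Proof. by move=> AB sA; apply: subset_trans AB. Qed.

Lemma permM_disjoint_on A C c r : perm_on C c -> perm_on (A :\: C) r ->
  forall x, (c * r) x = if x \in C then c x else r x.
Proof.
move=> cC rAC x; rewrite permM; case: ifP => xC.
  by rewrite (out_perm rAC) // inE (perm_closed _ cC) xC.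
by rewrite (out_perm cC) ?xC.
Qed.

(* Only cycles inside A are constrained: those of a permutation on A lying
   outside A are fixed points. *)
Definition has_cycle_sizes P A s := [forall D in porbits s, (D \subset A) ==> P #|D|].

Definition sized_perms P A := [set s | perm_on A s & has_cycle_sizes P A s].

Definition cyclic_perms C := [set c | perm_on C c & C \in porbits c].

Definition sized_perms_with_cycle P A C := [set s in sized_perms P A | C \in porbits s].

Lemma has_cycle_sizesP P A s :
  reflect (forall y, porbit s y \subset A -> P #|porbit s y|) (has_cycle_sizes P A s).
Proof.
apply: (iffP forall_inP) => [h y sA | h D /imsetP[y _ ->]]; last exact/implyP/h.
by have := h (porbit s y) (imset_f _ isT); rewrite sA.
Qed.

Lemma mul_cyclic_sized_perm P A C c r : C \subset A -> P #|C| ->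
  c \in cyclic_perms C -> r \in sized_perms P (A :\: C) ->
  c * r \in sized_perms_with_cycle P A C.
Proof.
rewrite !inE => CA PC /andP[cC /porbitsP[x0 Cx0]] /andP[rAC /has_cycle_sizesP Pr].
have cCC : {in C, forall z, c z \in C} by move=> z zC; rewrite (perm_closed _ cC).
have rAA : {in A :\: C, forall z, r z \in A :\: C}.
  by move=> z zC; rewrite (perm_closed _ rAC).
have crC : {in C, c =1 c * r} by move=> z zC; rewrite (permM_disjoint_on cC rAC) zC.
have crAC : {in A :\: C, r =1 c * r}.
  by move=> z; rewrite inE (permM_disjoint_on cC rAC) => /andP[/negbTE ->].
have orbitC y : y \in C -> porbit (c * r) y = C.
  move=> yC; rewrite -(eq_porbit_in cCC crC yC) Cx0; apply/eqP.
  by rewrite eq_porbit_mem -Cx0.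
rewrite perm_onM ?(perm_onS CA cC) ?(perm_onS (subsetDl A C) rAC) //=; apply/andP; split.
  apply/has_cycle_sizesP => y yA.
  have yA' : y \in A by apply: (subsetP yA); apply: porbit_id.
  have [yC|yC] := boolP (y \in C); first by rewrite orbitC.
  have yAC : y \in A :\: C by rewrite inE yC yA'.
  by rewrite -(eq_porbit_in rAA crAC yAC); apply/Pr/porbit_subset.
by apply/porbitsP; exists x0; rewrite orbitC // Cx0 porbit_id.
Qed.

Lemma restr_sized_perm_with_cycle P A C s : s \in sized_perms_with_cycle P A C ->
  (restr_perm C s, restr_perm (A :\: C) s) \in setX (cyclic_perms C) (sized_perms P (A :\: C))
  /\ s = restr_perm C s * restr_perm (A :\: C) s.
Proof.
rewrite !inE => /andP[/andP[sA /has_cycle_sizesP Ps] /porbitsP[x0 Cx0]].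
have sC z : (s z \in C) = (z \in C) by rewrite Cx0 mem_porbit_perm.
have sAC z : (s z \in A :\: C) = (z \in A :\: C) by rewrite !inE sC (perm_closed _ sA).
have NC : s \in 'N(C | 'P) by apply/astabsP => z; rewrite /aperm sC.
have NAC : s \in 'N(A :\: C | 'P) by apply/astabsP => z; rewrite /aperm sAC.
have cE : {in C, restr_perm C s =1 s} by move=> z; apply: restr_permE.
have rE : {in A :\: C, restr_perm (A :\: C) s =1 s} by move=> z; apply: restr_permE.
have cC := restr_perm_on C s; have rAC := restr_perm_on (A :\: C) s.
split; last first.
  apply/permP => z; rewrite (permM_disjoint_on cC rAC); case: ifP => zC; first by rewrite cE.
  have [zA|zA] := boolP (z \in A); first by rewrite rE // inE zC.
  by rewrite (out_perm sA zA) (out_perm rAC) // inE (negbTE zA) andbF.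
rewrite cC rAC /=; apply/andP; split.
  apply/porbitsP; exists x0; rewrite {1}Cx0; apply: (@eq_porbit_in C) => //.
  - by move=> z; rewrite sC.
  - by move=> z /cE.
  - by rewrite Cx0 porbit_id.
apply/has_cycle_sizesP => y yAC.
have yB : y \in A :\: C by apply: (subsetP yAC); apply: porbit_id.
have ey : porbit s y = porbit (restr_perm (A :\: C) s) y.
  apply: (@eq_porbit_in (A :\: C)) => // z; first by rewrite sAC.
  by move/rE.
by rewrite -ey; apply: Ps; rewrite ey; apply: subset_trans (subsetDl A C).
Qed.

Lemma sized_perms_with_cycleE P A C : C \subset A -> P #|C| ->
  sized_perms_with_cycle P A C =
    (fun q : {perm T} * {perm T} => q.1 * q.2) @: setX (cyclic_perms C) (sized_perms P (A :\: C)).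
Proof.
move=> CA PC; apply/setP => s; apply/idP/imsetP.
  by case/restr_sized_perm_with_cycle => crP sE; exists (restr_perm C s, restr_perm (A :\: C) s).
by case=> -[c r]; rewrite in_setX /= => /andP[cP rP] ->; apply: mul_cyclic_sized_perm.
Qed.

Lemma card_sized_perms_with_cycle P A C : C \subset A ->
  #|sized_perms_with_cycle P A C| = (P #|C| * #|cyclic_perms C| * #|sized_perms P (A :\: C)|)%N.
Proof.
move=> CA; case PC: (P #|C|); last first.
  rewrite mul0n; apply: eq_card0 => s; rewrite !inE.
  apply/negP => /andP[/andP[_ /has_cycle_sizesP Ps] /porbitsP[x Cx]].
  by move: PC; rewrite Cx Ps // -Cx.
rewrite mul1n sized_perms_with_cycleE // card_in_imset ?cardsX //.
move=> [c1 r1] [c2 r2]; rewrite !in_setX !inE /=.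
move=> /andP[/andP[c1C _] /andP[r1A _]] /andP[/andP[c2C _] /andP[r2A _]] E.
have eq_cr x : c1 x = c2 x /\ r1 x = r2 x.
  have := f_equal (fun p : {perm T} => p x) E; rewrite /= (permM_disjoint_on c1C r1A) (permM_disjoint_on c2C r2A).
  case: ifP => xC; last by rewrite (out_perm c1C) ?xC // (out_perm c2C) ?xC.
  by move=> ->; split; rewrite // (out_perm r1A) ?(out_perm r2A) // inE xC.
by congr pair; apply/permP => x; case: (eq_cr x).
Qed.

End CycleDecomposition.

Section CycleCounting.
Variable T : finType.
Implicit Types (P : pred nat) (A C D : {set T}) (s : {perm T}).

Lemma sum_card_porbits_subset A s : perm_on A s ->
  \sum_(D in porbits s | D \subset A) #|D| = #|A|.
Proof.
move=> sA; have sAA : {in A, forall z, s z \in A} by move=> z zA; rewrite (perm_closed _ sA).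
under eq_bigr => D _ do rewrite -sum1_card.
rewrite (exchange_big_dep xpredT) //= -sum1_card [RHS]big_mkcond; apply: eq_bigr => x _.
have orbit_x D : (D \in porbits s) && (D \subset A) && (x \in D) =
    (x \in A) && (D == porbit s x).
  apply/andP/andP => [[/andP[/porbitsP[y ->] /subsetP yA] xy]|[xA /eqP ->]].
    by rewrite yA // eq_porbit_mem porbit_sym.
  by rewrite porbit_id porbit_subset // andbT imset_f.
rewrite (eq_bigl _ _ orbit_x); case: (x \in A); first by rewrite big_pred1_eq.
by rewrite big_pred0.
Qed.

Lemma exchange_sum_porbits P A (Q : pred {set T}) (w : {set T} -> nat) :
  \sum_(s in sized_perms P A) \sum_(C in porbits s | Q C) w C =
  \sum_(C | Q C) w C * #|sized_perms_with_cycle P A C|.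
Proof.
rewrite (exchange_big_dep Q) => [|s C _ /andP[]] //=; apply: eq_bigr => C QC.
rewrite sum_nat_const mulnC; congr (_ * _)%N; apply: eq_card => s.
by rewrite [RHS]inE QC unfold_in /= andbT.
Qed.

Lemma card_mul_sized_perms P A :
  #|A| * #|sized_perms P A| = \sum_(C : {set T} | C \subset A) #|C| * #|sized_perms_with_cycle P A C|.
Proof.
rewrite -exchange_sum_porbits mulnC -sum_nat_const; apply: eq_bigr => s.
by rewrite inE => /andP[sA _]; rewrite sum_card_porbits_subset.
Qed.

Lemma sum_subsets_by_card A (w : nat -> nat) :
  \sum_(C : {set T} | C \subset A) w #|C| = \sum_(j < #|A|.+1) 'C(#|A|, j) * w j.
Proof.
rewrite (partition_big (fun C => inord #|C| : 'I_#|A|.+1) xpredT) //=.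
apply: eq_bigr => j _.
rewrite -cards_draws -(sum1_card (mem [set C : {set T} | C \subset A & #|C| == j])).
rewrite big_distrl /=.
have inord_card C : C \subset A -> (inord #|C| == j) = (#|C| == j).
  by move=> CA; rewrite -(inj_eq val_inj) /= inordK // ltnS subset_leq_card.
apply: eq_big => C; first by rewrite inE; case CA: (C \subset A) => //=; apply: inord_card.
by move=> /andP[CA]; rewrite (inord_card _ CA) => /eqP ->; rewrite mul1n.
Qed.

End CycleCounting.

Lemma fact_pred n : 0 < n -> n`! = n * n.-1`!.
Proof. by move=> n_gt0; rewrite -{1}(prednK n_gt0) factS prednK. Qed.

Lemma sum_binomial_fact_gt0 a :
  \sum_(j < a.+1) 'C(a, j) * (if j == 0 :> nat then 0 else j`! * (a - j)`!) = a * a`!.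
Proof.
rewrite big_ord_recl /= muln0 add0n.
under eq_bigr => j _ do rewrite /bump /= add1n bin_fact //.
by rewrite big_const_ord iter_addn_0 mulnC.
Qed.

Fixpoint even_cycle_count n :=
  match n with 0 => 1 | 1 => 0 | n'.+2 => n'.+1 ^ 2 * even_cycle_count n' end.

Lemma sum_ffact_even_cycle_count a :
  \sum_(j < a.+1) ~~ odd j * a ^_ j * even_cycle_count (a - j) = a.+1 * even_cycle_count a.
Proof.
elim/ltn_ind: a => -[|[|a]] IH.
- by rewrite big_ord_recl big_ord0.
- by rewrite !big_ord_recl big_ord0.
rewrite 2!big_ord_recl /= mul0n mul1n add0n ffactn0 mul1n.
under eq_bigr => j _ do rewrite /bump /= !add1n /= negbK ffactSS ffactSS subSS subSS.
rewrite (eq_bigr (fun j : 'I_a.+1 => a.+2 * a.+1 * (~~ odd j * a ^_ j * even_cycle_count (a - j)))).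
  by rewrite -big_distrr /= IH //=; ring.
by move=> j _; ring.
Qed.

Lemma sum_binomial_even_cycle_count a :
  \sum_(j < a.+1) 'C(a, j) * (if j == 0 :> nat then 0 else ~~ odd j * j`! * even_cycle_count (a - j))
  = a * even_cycle_count a.
Proof.
apply/eqP; rewrite -(eqn_add2l (even_cycle_count a)) -mulSn -sum_ffact_even_cycle_count.
rewrite big_ord_recl [in X in _ == X]big_ord_recl /= muln0 add0n ffactn0 subn0 !mul1n.
by apply/eqP; congr (_ + _); apply: eq_bigr => j _; rewrite -bin_ffact; ring.
Qed.

Section CyclicAndEvenPerms.
Variable T : finType.
Implicit Types (A C : {set T}).

Lemma card_sized_perms_predT A : #|sized_perms predT A| = #|A|`!.
Proof.
rewrite -card_perm; apply: eq_card => s; rewrite !inE andb_idr // => _.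
by apply/forall_inP => D _; rewrite implybT.
Qed.

Lemma card_cyclic_perms A : 0 < #|A| -> #|cyclic_perms A| = #|A|.-1`!.
Proof.
move hA: #|A| => a; elim/ltn_ind: a A hA => a IH A hA a_gt0.
have weightE C : C \subset A -> C != A ->
    #|C| * #|sized_perms_with_cycle predT A C| = if #|C| == 0 then 0 else #|C|`! * (#|A| - #|C|)`!.
  move=> CA CnA; rewrite card_sized_perms_with_cycle // mul1n card_sized_perms_predT cardsDS //.
  case: (posnP #|C|) => [->|C_gt0]; first by rewrite mul0n.
  have ltCA : #|C| < a by rewrite -hA proper_card // properEneq CnA.
  by rewrite (IH #|C|) // mulnA -fact_pred.
have := card_mul_sized_perms predT A; rewrite card_sized_perms_predT (bigD1 A) //=.
rewrite (eq_bigr (fun C => if #|C| == 0 then 0 else #|C|`! * (#|A| - #|C|)`!)); last first.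
  by move=> C /andP[CA CnA]; rewrite weightE.
have := sum_subsets_by_card A (fun j => if j == 0 then 0 else j`! * (#|A| - j)`!).
rewrite sum_binomial_fact_gt0 (bigD1 A) //= => <-.
rewrite card_sized_perms_with_cycle // setDv card_sized_perms_predT cards0 subnn !muln1 /=.
rewrite hA (fact_pred a_gt0) eqn0Ngt a_gt0 mul1n => /eqP; rewrite eqn_add2r eqn_mul2l eqn0Ngt a_gt0.
by rewrite eq_sym => /eqP.
Qed.

Lemma card_sized_perms_even A : #|sized_perms (predC odd) A| = even_cycle_count #|A|.
Proof.
move hA: #|A| => a; elim/ltn_ind: a A hA => -[|a] IH A hA.
  move/cards0_eq: hA => ->; rewrite /= -(fact0) -(cards0 T) -card_perm.
  apply: eq_card => s; rewrite !inE andb_idr // => _.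
  apply/forall_inP => D /porbitsP[x ->]; apply/implyP => /subsetP h.
  by have := h x (porbit_id _ _); rewrite inE.
have := card_mul_sized_perms (predC odd) A.
rewrite (eq_bigr (fun C => if #|C| == 0 then 0
                          else ~~ odd #|C| * #|C|`! * even_cycle_count (#|A| - #|C|))).
  rewrite (sum_subsets_by_card A (fun j => if j == 0 then 0
                              else ~~ odd j * j`! * even_cycle_count (#|A| - j))).
  by rewrite sum_binomial_even_cycle_count hA => /eqP; rewrite eqn_mul2l /= => /eqP.
move=> C CA; rewrite card_sized_perms_with_cycle //.
case: (posnP #|C|) => [->|C_gt0]; first by rewrite mul0n.
rewrite card_cyclic_perms // (IH (#|A| - #|C|)) ?cardsDS //; last by rewrite hA ltn_subrL C_gt0.
by rewrite (fact_pred C_gt0) /=; ring.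
Qed.

End CyclicAndEvenPerms.

Lemma even_cycle_permsE n : even_cycle_perms n = sized_perms (predC odd) [set: 'I_n].
Proof.
apply/setP => s; rewrite !inE; have -> : perm_on [set: 'I_n] s by apply/subsetP => x.
by apply: eq_forallb_in => D _; rewrite subsetT.
Qed.

Lemma card_even_cycle_perms n : #|even_cycle_perms n| = even_cycle_count n.
Proof. by rewrite even_cycle_permsE card_sized_perms_even cardsT card_ord. Qed.

Lemma sum_Yk n k : 0 < k -> ~~ odd k -> k <= n ->
  \sum_(s in even_cycle_perms n) Yk k s = n ^_ k * even_cycle_count (n - k).
Proof.
move=> k_gt0 ek kn; rewrite /Yk -big_distrr /= even_cycle_permsE.
rewrite (eq_bigr (fun s => \sum_(C in porbits s | #|C| == k) 1)); last first.
  by move=> s _; rewrite /Xk -sum1_card; apply: eq_bigl => C; rewrite inE.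
rewrite exchange_sum_porbits.
under eq_bigr => C /eqP Ck.
  rewrite card_sized_perms_with_cycle ?subsetT // card_cyclic_perms ?Ck //.
  rewrite card_sized_perms_even cardsDS ?subsetT // cardsT card_ord Ck /= ek.
  over.
rewrite sum_nat_const.
have -> : #|[pred C : {set 'I_n} | #|C| == k]| = 'C(n, k).
  by have := card_draws 'I_n k; rewrite card_ord => <-; apply: eq_card => C; rewrite inE.
by rewrite -bin_ffact (fact_pred k_gt0) /=; ring.
Qed.

Lemma even_cycle_count_double_gt0 m : 0 < even_cycle_count m.*2.
Proof. by elim: m => // m IH; rewrite doubleS /= muln_gt0 IH expn_gt0. Qed.

Local Open Scope ring_scope.

Section MeanAsymptotics.
Variable R : realType.

Lemma EeYk_ffact n k : (0 < k)%N -> ~~ odd k -> (k <= n)%N ->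
  EeYk R n k = (n ^_ k * even_cycle_count (n - k))%N%:R / (even_cycle_count n)%:R.
Proof. by move=> *; rewrite /EeYk -natr_sum sum_Yk // card_even_cycle_perms. Qed.

(* The value of [EeYk R n k] for [n = 2(p + j)] and [k = 2j]. *)
Definition mean_Yk p j : R :=
  ((p + j).*2 ^_ j.*2 * even_cycle_count p.*2)%N%:R / (even_cycle_count (p + j).*2)%:R.

Lemma mean_Yk0 p : mean_Yk p 0 = 1.
Proof.
by rewrite /mean_Yk addn0 ffactn0 mul1n divff // pnatr_eq0 -lt0n even_cycle_count_double_gt0.
Qed.

Lemma mean_YkS p j :
  mean_Yk p j.+1 = mean_Yk p j * ((2 * (p + j)%:R + 2) / (2 * (p + j)%:R + 1)).
Proof.
rewrite /mean_Yk addnS !doubleS !ffactSS /=; set D := (p + j).*2.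
have -> : 2 * (p + j)%:R = D%:R :> R by rewrite /D -mul2n natrM.
have e_neq0 : (even_cycle_count D)%:R != 0 :> R.
  by rewrite pnatr_eq0 -lt0n even_cycle_count_double_gt0.
have D1_neq0 : D%:R + 1 != 0 :> R by rewrite natr1 pnatr_eq0.
rewrite !natrM -[D.+2]addn2 -[D.+1]addn1 !natrD; field; exact/andP.
Qed.

Lemma mean_Yk_ge0 p j : 0 <= mean_Yk p j.
Proof. exact: divr_ge0. Qed.

Lemma mean_Yk_sqr_le p j : (0 < p)%N -> mean_Yk p j ^+ 2 * p%:R <= (p + j)%:R.
Proof.
move=> p_gt0; elim: j => [|j IH]; first by rewrite mean_Yk0 addn0 expr1n mul1r.
rewrite mean_YkS exprMn mulrAC addnS -[(p + j).+1%:R]natr1.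
move: IH; set x := mean_Yk p j; set M : R := (p + j)%:R => IH.
have M_ge0 : 0 <= M by [].
set r := (2 * M + 2) / (2 * M + 1).
have r2M : M * r ^+ 2 <= M + 1.
  by rewrite /r expr_div_n mulrA ler_pdivrMr ?exprn_gt0 //; [nra | lra].
by apply: le_trans r2M; rewrite ler_wpM2r ?sqr_ge0.
Qed.

Lemma mean_Yk_sqr_ge p j : (0 < p)%N ->
  (4 * p%:R - 1) * (p + j)%:R ^+ 2 <= mean_Yk p j ^+ 2 * p%:R ^+ 2 * (4 * (p + j)%:R - 1).
Proof.
move=> p_gt0; have P_ge1 : 1 <= p%:R :> R by rewrite ler1n.
elim: j => [|j IH]; first by rewrite mean_Yk0 addn0 expr1n mul1r mulrC.
rewrite mean_YkS exprMn addnS -[(p + j).+1%:R]natr1.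
move: IH; set x := mean_Yk p j; set M : R := (p + j)%:R => IH.
have M_ge1 : 1 <= M by rewrite ler1n addn_gt0 p_gt0.
set r := (2 * M + 2) / (2 * M + 1).
have key : (M + 1) ^+ 2 * (4 * M - 1) <= M ^+ 2 * (4 * M + 3) * r ^+ 2.
  rewrite /r expr_div_n mulrA ler_pdivlMr; last by rewrite exprn_gt0 //; lra.
  rewrite -subr_ge0.
  have -> : M ^+ 2 * (4 * M + 3) * (2 * M + 2) ^+ 2 - (M + 1) ^+ 2 * (4 * M - 1) * (2 * M + 1) ^+ 2
    = (M + 1) ^+ 2 by ring.
  exact: sqr_ge0.
rewrite -(@ler_pM2r _ (4 * M - 1)); last lra.
have Pq : 0 <= 4 * p%:R - 1 :> R by lra.
have rq : 0 <= r ^+ 2 * (4 * M + 3) by rewrite mulr_ge0 ?sqr_ge0 //; lra.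
have := ler_wpM2l Pq key; have := ler_wpM2r rq IH; lra.
Qed.

(* With z := x sqrt(P/M) the hypotheses say 1 - 1/(4P) <= z^2 <= 1, hence
   0 <= 1 - z <= 1 - z^2 <= 1/(4P). *)
Lemma inv_sqrt_approx (x P M : R) : 1 <= P -> P <= M -> 0 <= x ->
  x ^+ 2 * P <= M -> (4 * P - 1) * M ^+ 2 <= x ^+ 2 * P ^+ 2 * (4 * M - 1) ->
  `|x - (Num.sqrt (P / M))^-1| <= (4 * P)^-1 * (Num.sqrt (P / M))^-1.
Proof.
move=> P_ge1 PM x_ge0 x_le x_ge; have M_gt0 : 0 < M by lra.
set s := Num.sqrt (P / M).
have s_gt0 : 0 < s by rewrite sqrtr_gt0 divr_gt0 //; lra.
have s2 : s ^+ 2 = P / M by rewrite sqr_sqrtr // divr_ge0 //; lra.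
set z := x * s.
have z2 : z ^+ 2 * M = x ^+ 2 * P by rewrite exprMn s2; field; lra.
have z_ge0 : 0 <= z by rewrite mulr_ge0 // ltW.
have z2_le1 : z ^+ 2 <= 1 by rewrite -(ler_pM2r M_gt0) mul1r z2.
have z2_ge : 4 * P - 1 <= z ^+ 2 * (4 * P).
  rewrite -(@ler_pM2r _ (M ^+ 2)) ?exprn_gt0 //.
  have -> : z ^+ 2 * (4 * P) * M ^+ 2 = z ^+ 2 * M * (4 * P * M) by ring.
  have : 0 <= x ^+ 2 * P ^+ 2 by rewrite mulr_ge0 ?sqr_ge0.
  rewrite z2; lra.
have -> : x - s^-1 = (z - 1) * s^-1 by rewrite /z; field; lra.
rewrite normrM (gtr0_norm (x := s^-1)) ?invr_gt0 // ler_pM2r ?invr_gt0 //.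
rewrite ler0_norm ?subr_le0; last by nra.
rewrite -(@ler_pM2r _ (4 * P)); last lra.
rewrite mulVf; [nra | lra].
Qed.

Lemma mean_Yk_approx p j : (0 < p)%N ->
  `|mean_Yk p j - (Num.sqrt (p%:R / (p + j)%:R))^-1|
    <= (4 * p%:R)^-1 * (Num.sqrt (p%:R / (p + j)%:R))^-1.
Proof.
move=> p_gt0; apply: inv_sqrt_approx; rewrite ?ler1n ?ler_nat ?leq_addr //.
- exact: mean_Yk_ge0.
- exact: mean_Yk_sqr_le.
- exact: mean_Yk_sqr_ge.
Qed.

Lemma EeYk_approx n k : ~~ odd n -> ~~ odd k -> (0 < k < n)%N ->
  `|EeYk R n k - (Num.sqrt (1 - k%:R / n%:R))^-1|
    <= (2 * (n - k)%:R)^-1 * (Num.sqrt (1 - k%:R / n%:R))^-1.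
Proof.
move=> en ek /andP[k_gt0 kn].
set p := (n - k)./2; set j := k./2.
have kE : k = j.*2 by rewrite even_halfK.
have pE : (n - k = p.*2)%N by rewrite even_halfK // oddB ?(ltnW kn) // (negbTE en) (negbTE ek).
have nE : n = (p + j).*2 by rewrite doubleD -pE -kE subnK // ltnW.
have p_gt0 : (0 < p)%N by rewrite -double_gt0 -pE subn_gt0.
have -> : EeYk R n k = mean_Yk p j by rewrite EeYk_ffact ?(ltnW kn) // /mean_Yk -nE -kE -pE.
have -> : 1 - k%:R / n%:R = p%:R / (p + j)%:R :> R.
  rewrite nE kE -!mul2n !natrM natrD; field.
  by rewrite gt_eqF // -natrD ltr0n addn_gt0 p_gt0.
have -> : 2 * (n - k)%:R = 4 * p%:R :> R by rewrite pE -mul2n natrM; ring.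
exact: mean_Yk_approx.
Qed.

End MeanAsymptotics.

Theorem proposition3p4 (R : realType) (eps : R) :
  0 < eps < 1 ->
  exists (C : R) (N : nat), forall n k : nat,
    (N <= n)%N -> ~~ odd n -> ~~ odd k -> (0 < k)%N ->
    (k%:R / n%:R < 1 - eps) ->
    `| EeYk R n k - (Num.sqrt (1 - k%:R / n%:R))^-1 |
      <= C / n%:R * (Num.sqrt (1 - k%:R / n%:R))^-1.
Proof.
case/andP => eps_gt0 eps_lt1; exists eps^-1, 1%N => n k n_gt0 en ek k_gt0.
have nR_gt0 : 0 < n%:R :> R by rewrite ltr0n.
rewrite ltr_pdivrMr // => k_lt.
have k_lt_n : (k < n)%N.
  by rewrite -(ltr_nat R); have := mulr_gt0 eps_gt0 nR_gt0; lra.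
apply: le_trans (EeYk_approx R en ek _) _; first by rewrite k_gt0 k_lt_n.
rewrite ler_pM2r ?invr_gt0 ?sqrtr_gt0; last first.
  by rewrite subr_gt0 ltr_pdivrMr // mul1r ltr_nat.
rewrite -invfM lef_pV2 ?posrE ?mulr_gt0 //; last by rewrite ltr0n subn_gt0.
rewrite natrB ?(ltnW k_lt_n) //; have := mulr_gt0 eps_gt0 nR_gt0; lra.
Qed.
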